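(* Let $G$ be a bipartite permutation graph and let $I$ and $J$ be maximum independent sets of $G$. Suppose that there is a reconfiguration sequence between $I$ and $J$. Then there is a reconfiguration sequence of length $|I\setminus J|$ between $I$ and $J$.
   Context: A graph $G=(V,E)$ with $V=[n]$ is a permutation graph if there is a permutation $\pi:[n]\to[n]$ such that for $1\le i<j\le n$, $\{i,j\}\in E$ iff $\pi(i)>\pi(j)$. A reconfiguration sequence between independent sets $I$ and $J$ (with $|I|=|J|$) is a sequence of independent sets $I_0=I,I_1,\dots,I_\ell=J$ such that for each $1\le i\le \ell$, $I_i\setminus I_{i-1}=\{v\}$ and $I_{i-1}\setminus I_i=\{u\}$ for some vertices $u,v$; its length is $\ell$. *)

From mathcomp Require Import all_boot all_order all_fingroup.
Set Implicit Arguments. Unset Strict Implicit. Unset Printing Implicit Defensive.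

Definition is_perm_graph (n : nat) (e : rel 'I_n) : Prop :=
  exists pi : 'S_n, forall i j : 'I_n,
    e i j = ((i < j) && (pi j < pi i)) || ((j < i) && (pi i < pi j)).

Definition is_bipartite (T : finType) (e : rel T) : Prop :=
  exists c : T -> bool, forall x y, e x y -> c x != c y.

Definition independent (T : finType) (e : rel T) (I : {set T}) : bool :=
  [forall x in I, forall y in I, ~~ e x y].

Definition max_independent (T : finType) (e : rel T) (I : {set T}) : Prop :=
  independent e I /\ forall K : {set T}, independent e K -> #|K| <= #|I|.

Definition reconf_step (T : finType) (A B : {set T}) : Prop :=
  exists u v : T, B :\: A = [set v] /\ A :\: B = [set u].

(* A reconfiguration sequence I_0 = I, I_1, ..., I_l = J is represented by
   the list s = [:: I_1; ...; I_l]; its length is l = size s. *)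
Fixpoint reconf_path (T : finType) (e : rel T) (A : {set T}) (s : seq {set T}) : Prop :=
  match s with
  | [::] => True
  | B :: s' => independent e B /\ reconf_step A B /\ reconf_path e B s'
  end.

Definition reconf_seq (T : finType) (e : rel T) (I J : {set T}) (s : seq {set T}) : Prop :=
  independent e I /\ reconf_path e I s /\ last I s = J.

From mathcomp Require Import all_boot all_order all_fingroup.
From mathcomp Require Import zify.
Set Implicit Arguments. Unset Strict Implicit. Unset Printing Implicit Defensive.

(** Fix a proper 2-colouring [c]. For maximum independent sets [K] and [L],
   the set that agrees with [K ∪ L] on the [c]-side and with [K ∩ L] on the
   other side is independent, and so is the set with the two sides exchanged;
   their sizes add up to [#|K| + #|L|], so both are maximum. Hence a maximum
   independent set is determined by its [c]-side, and enlarging the [c]-side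
   shrinks the other side.

   Let [Z] be the maximum independent set whose [c]-side is that of [I ∪ J].
   Walking along the given sequence from [I] to [J], each vertex of [J \ I]
   on the [c]-side can be added to the current set when it first appears, at
   the cost of one reconfiguration step; this reaches [Z]. Exchanging the
   sides, the same walk leads from [Z] to [J], adding the vertices of [J \ I]
   on the other side. Together this takes [#|J \ I| = #|I \ J|] steps. *)

Definition proper_colouring (T : finType) (e : rel T) (c : pred T) : Prop :=
  forall x y, e x y -> c x != c y.

Lemma proper_colouringN (T : finType) (e : rel T) (c : pred T) :
  proper_colouring e c -> proper_colouring e (predC c).
Proof. by move=> hc x y /hc /=; case: (c x); case: (c y). Qed.

Definition side_join (T : finType) (c : pred T) (K L : {set T}) : {set T} :=
  [set x | if c x then (x \in K) || (x \in L) else (x \in K) && (x \in L)].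

Section MaxIndependent.

Variables (T : finType) (e : rel T).

Lemma independentP (K : {set T}) :
  reflect {in K &, forall x y, ~~ e x y} (independent e K).
Proof.
apply: (iffP forall_inP) => [hK x y xK | hK x xK].
  by move/forall_inP: (hK x xK); apply.
by apply/forall_inP => y; apply: hK.
Qed.

Lemma max_independent_card (K L : {set T}) :
  max_independent e K -> max_independent e L -> #|K| = #|L|.
Proof. by case=> iK maxK [iL maxL]; apply/eqP; rewrite eqn_leq maxK // maxL. Qed.

Lemma reconf_step_card (K L : {set T}) : reconf_step K L -> #|K| = #|L|.
Proof.
case=> u [v [LK KL]]; have := cardsID L K; have := cardsID K L.
by rewrite LK KL !cards1 setIC; lia.
Qed.

Lemma reconf_step_new (K L : {set T}) :
  reconf_step K L -> exists2 v, v \in L & forall x, x \in L -> x = v \/ x \in K.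
Proof.
case=> _ [v [LK _]]; exists v; first by have := set11 v; rewrite -LK inE => /andP [].
move=> x xL; case xK: (x \in K); [by right | left].
by apply/set1P; rewrite -LK inE xK.
Qed.

Lemma max_independent_reconf_step (K L : {set T}) :
  max_independent e K -> independent e L -> reconf_step K L ->
  max_independent e L.
Proof.
by move=> [_ maxK] iL /reconf_step_card KL; split=> // M /maxK; rewrite KL.
Qed.

Lemma reconf_seq_cat (K L M : {set T}) (p q : seq {set T}) :
  reconf_seq e K L p -> reconf_seq e L M q -> reconf_seq e K M (p ++ q).
Proof.
case=> iK [pathp <-] [_ [pathq <-]]; split=> //; rewrite last_cat; split=> //.
elim: p K {iK} pathp pathq => [|B p IH] K //= [iB [KB pathp]] pathq.
by split; [|split; [|exact: IH]].
Qed.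

Lemma reconf_seq_cons (K K' M : {set T}) (p : seq {set T}) :
  independent e K -> reconf_step K K' -> reconf_seq e K' M p ->
  reconf_seq e K M (K' :: p).
Proof. by move=> iK KK' [iK' [pathp lastp]]. Qed.

Lemma independent_side_join (c : pred T) (K L : {set T}) :
  proper_colouring e c -> independent e K -> independent e L ->
  independent e (side_join c K L).
Proof.
move=> hc /independentP iK /independentP iL; apply/independentP => x y.
rewrite !inE => xKL yKL; apply/negP => exy; move: (hc x y exy) xKL yKL.
case: (c x); case: (c y) => //= _.
- case/orP=> [xK | xL] /andP [yK yL];
    [have := iK x y xK yK | have := iL x y xL yL]; by rewrite exy.
- case/andP=> xK xL /orP [yK | yL];
    [have := iK x y xK yK | have := iL x y xL yL]; by rewrite exy.
Qed.

Lemma card_side_join (c : pred T) (K L : {set T}) :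
  #|side_join c K L| + #|side_join (predC c) K L| = #|K| + #|L|.
Proof.
rewrite -cardsUI -(cardsUI K L); congr (_ + _); apply: eq_card => x;
  by rewrite !inE /=; case: (c x); case: (x \in K); case: (x \in L).
Qed.

Lemma max_independent_side_join (c : pred T) (K L : {set T}) :
  proper_colouring e c -> max_independent e K -> max_independent e L ->
  max_independent e (side_join c K L).
Proof.
move=> hc maxK maxL; have [iK _] := maxK; have [iL _] := maxL.
have ijoin := independent_side_join hc iK iL.
have imeet := independent_side_join (proper_colouringN hc) iK iL.
have := maxK.2 _ ijoin; have := maxL.2 _ imeet; have := card_side_join c K L.
rewrite -(max_independent_card maxK maxL).
by split=> // M /maxK.2; lia.
Qed.

Section Colouring.

Variable c : pred T.
Hypothesis c_proper : proper_colouring e c.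

Lemma max_independent_side_sub (K L : {set T}) :
  max_independent e K -> max_independent e L ->
  (forall x, c x -> x \in K -> x \in L) ->
  forall x, ~~ c x -> x \in L -> x \in K.
Proof.
move=> maxK maxL KL x cx xL.
have joinL : side_join c L K = L.
  have maxLK := max_independent_side_join c_proper maxL maxK.
  apply/eqP; rewrite eqEcard (max_independent_card maxLK maxL) leqnn andbT.
  apply/subsetP => y; rewrite inE.
  by case cy: (c y); [case/orP=> // /(KL y cy) | case/andP].
by move: xL; rewrite -joinL inE (negbTE cx) => /andP [].
Qed.

Lemma max_independent_eq_side (K L : {set T}) :
  max_independent e K -> max_independent e L ->
  (forall x, c x -> (x \in K) = (x \in L)) -> K = L.
Proof.
move=> maxK maxL KL; apply/setP => x; case cx: (c x); first exact: KL.
apply/idP/idP; apply: max_independent_side_sub; rewrite ?cx //.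
all: by move=> y cy; rewrite KL.
Qed.

Lemma reconf_step_side_add (K L : {set T}) (v : T) :
  max_independent e K -> max_independent e L -> c v -> v \notin K ->
  (forall x, c x -> (x \in L) = (x == v) || (x \in K)) -> reconf_step K L.
Proof.
move=> maxK maxL cv vK Lside.
have LK : L :\: K = [set v].
  apply/setP => x; rewrite !inE; case cx: (c x).
    by rewrite Lside //; case: eqVneq => [-> | _]; rewrite ?vK //; case: (x \in K).
  have /(_ x) KL : forall y, ~~ c y -> y \in L -> y \in K.
    by apply: max_independent_side_sub => // y cy; rewrite Lside // orbC => ->.
  have -> : (x == v) = false by apply: contraFF cx => /eqP ->.
  rewrite cx in KL; by case: (x \in L) KL; rewrite ?andbF // => /(_ isT isT) ->.
have /cards1P [u KL] : #|K :\: L| == 1.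
  by rewrite cardsD (max_independent_card maxK maxL) setIC -cardsD LK cards1.
by exists u, v.
Qed.

Variable Z : {set T}.
Hypothesis maxZ : max_independent e Z.

Lemma max_independent_side_add (K C : {set T}) (v : T) :
  max_independent e K -> max_independent e C -> c v -> v \in C -> v \in Z ->
  (forall x, c x -> x \in K -> x \in Z) ->
  (forall x, c x -> x \in C -> x \in Z -> x = v \/ x \in K) ->
  exists2 K', max_independent e K' &
    forall x, c x -> (x \in K') = (x == v) || (x \in K).
Proof.
move=> maxK maxC cv vC vZ KZ CZK.
exists (side_join (predC c) (side_join c K C) Z).
  apply: max_independent_side_join (proper_colouringN c_proper) _ maxZ.
  exact: max_independent_side_join.
move=> x cx; rewrite !inE /= cx /=.
case: eqVneq => [-> | xv]; first by rewrite vC vZ orbT.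
case xK: (x \in K); first by rewrite KZ.
apply/negbTE/andP => -[xC xZ].
by case: (CZK x cx xC xZ) => [/eqP | ]; rewrite ?xK ?(negbTE xv).
Qed.

(* The climb towards [Z] along a walk: [K] is the current set, and the walk
   from [C] still supplies the vertices of the [c]-side of [Z] missing in [K]. *)
Lemma reconf_climb (s : seq {set T}) (C K : {set T}) :
  max_independent e C -> max_independent e K -> reconf_path e C s ->
  (forall x, c x -> x \in K -> x \in Z) ->
  (forall x, c x -> x \in C -> x \in Z -> x \in K) ->
  (forall x, c x -> x \in Z -> x \in K \/ x \in last C s) ->
  exists p, reconf_seq e K Z p /\ size p = #|[set x in Z :\: K | c x]|.
Proof.
elim: s C K => [|C' s IH] C K maxC maxK /=.
  move=> _ KZ CK ZKC; have -> : K = Z.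
    apply: max_independent_eq_side => // x cx; apply/idP/idP; first exact: KZ.
    by move=> xZ; case: (ZKC x cx xZ) => // /CK; apply.
  exists [::]; split; first by split; [exact: maxZ.1 | ].
  rewrite setDv; apply/esym/eqP; rewrite cards_eq0.
  by apply/eqP/setP => x; rewrite !inE.
case=> iC' [CC' pathC'] KZ CK ZKC.
have maxC' := max_independent_reconf_step maxC iC' CC'.
have [v vC' C'C] := reconf_step_new CC'.
case: (boolP [&& c v, v \in Z & v \notin K]); last first.
  move=> keep; apply: (IH C' K) => // x cx xC' xZ.
  case: (C'C x xC') => [xv | /CK]; last exact.
  by move: keep; rewrite -xv cx xZ /= negbK.
case/and3P=> cv vZ vK.
have C'ZK x : c x -> x \in C' -> x \in Z -> x = v \/ x \in K.
  by move=> cx xC' xZ; case: (C'C x xC') => [-> | xC]; [left | right; exact: CK].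
have [K' maxK' K'side] := max_independent_side_add maxK maxC' cv vC' vZ KZ C'ZK.
have [p [K'Z sizep]] : exists p,
    reconf_seq e K' Z p /\ size p = #|[set x in Z :\: K' | c x]|.
  apply: (IH C' K') => // x cx; rewrite ?K'side //.
  - by case/orP => [/eqP -> // | ]; apply: KZ.
  - by move=> xC' xZ; case: (C'ZK x cx xC' xZ) => [-> | ->]; rewrite ?eqxx ?orbT.
  - by case/(ZKC x cx) => [xK | ]; [left; rewrite xK orbT | right].
exists (K' :: p); split.
  exact: reconf_seq_cons maxK.1 (reconf_step_side_add maxK maxK' cv vK K'side) K'Z.
have -> : [set x in Z :\: K | c x] = v |: [set x in Z :\: K' | c x].
  apply/setP => x; rewrite !inE.
  case: eqVneq => [-> | xv] /=; first by rewrite cv vZ vK.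
  by case cx: (c x); rewrite ?andbF // K'side // (negbTE xv).
by rewrite /= cardsU1 sizep !inE K'side // eqxx.
Qed.

End Colouring.

End MaxIndependent.

Theorem theorem2 (n : nat) (e : rel 'I_n) (I J : {set 'I_n}) :
  is_perm_graph e -> is_bipartite e ->
  max_independent e I -> max_independent e J ->
  (exists s : seq {set 'I_n}, reconf_seq e I J s) ->
  exists s : seq {set 'I_n}, reconf_seq e I J s /\ size s = #|I :\: J|.
Proof.
move=> _ [c hc] maxI maxJ [s [_ [pathIJ lastIJ]]].
pose Z := side_join c I J.
have maxZ : max_independent e Z := max_independent_side_join hc maxI maxJ.
have [p [IZ sizep]] :
    exists p, reconf_seq e I Z p /\ size p = #|[set x in Z :\: I | c x]|.
  apply: (reconf_climb hc maxZ maxI maxI pathIJ) => x cx //;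
    rewrite ?lastIJ /Z inE cx; first by move=> ->.
  by case/orP; [left | right].
have [q [ZJ sizeq]] :
    exists q, reconf_seq e Z J q /\ size q = #|[set x in J :\: Z | predC c x]|.
  apply: (reconf_climb (proper_colouringN hc) maxJ maxI maxZ pathIJ) => x cx;
    rewrite ?lastIJ /Z inE (negbTE cx); first by case/andP.
  - by move=> -> ->.
  - by right.
exists (p ++ q); split; first exact: reconf_seq_cat IZ ZJ.
rewrite size_cat sizep sizeq cardsD (max_independent_card maxI maxJ) setIC -cardsD.
rewrite -(cardsID [set x | c x] (J :\: I)).
congr (_ + _); apply: eq_card => x; rewrite /Z !inE /=;
  by case: (c x); case: (x \in I); case: (x \in J).
Qed.
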